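(* Let $\gamma>0$ and, for $n\in\mathbb{N}$, let $D_n=\operatorname{diag}(1,2,\dots,n)\in\mathbb{R}^{n\times n}$ and \[ \mathcal{W}_n=\begin{pmatrix} 0 & D_n & 0\\ -D_n & 0 & \gamma D_n\\ 0 & -\gamma D_n & -D_n^2\end{pmatrix}\in\mathbb{R}^{3n\times 3n}, \] regarded as an operator on $\mathbb{C}^{3n}$ with the Euclidean inner product. Then for every $n\in\mathbb{N}$ one has $i\mathbb{R}\subset\rho(\mathcal{W}_n)$ (the resolvent set), and $\sup_{n\in\mathbb{N}}\|\mathcal{W}_n^{-1}\|<\infty$.
   Context: $\mathcal{W}_n$ is the matrix obtained in the paper from a modal approximation of the weakly coupled thermoelastic system under Dirichlet (displacement)–Neumann (temperature) boundary conditions, using the basis $\sqrt{2/\pi}\,\frac1j\sin jx$, $\sqrt{2/\pi}\sin jx$, $\sqrt{2/\pi}\cos jx$, $j=1,\dots,n$. *)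

From HB Require Import structures.
From mathcomp Require Import all_boot all_order all_algebra.
From mathcomp Require Import reals.
From mathcomp Require Export complex.
Set Implicit Arguments. Unset Strict Implicit. Unset Printing Implicit Defensive.
Import Order.TTheory GRing.Theory Num.Theory.
Local Open Scope ring_scope.

Definition Dmx (R : realType) (n : nat) : 'M[R[i]]_n :=
  diag_mx (\row_(j < n) (j.+1)%:R).

(* W_n = [[0, D, 0], [-D, 0, gamma D], [0, -gamma D, -D^2]] as a
   (n + n + n) x (n + n + n) complex matrix (blocks in this order). *)
Definition Wmx (R : realType) (gamma : R) (n : nat) : 'M[R[i]]_(n + n + n) :=
  let D := Dmx R n in
  let g : R[i] := (gamma%:C)%C in
  block_mx (block_mx 0 D (- D) 0)
           (col_mx 0 (g *: D))
           (row_mx 0 (- (g *: D)))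
           (- (D *m D)).

Definition enorm (R : realType) (m : nat) (v : 'cV[R[i]]_m) : R :=
  Num.sqrt (\sum_(k < m) (complex.Re (v k 0) ^+ 2 + complex.Im (v k 0) ^+ 2)).

Definition resolvent (R : realType) (m : nat) (A : 'M[R[i]]_m) : pred R[i] :=
  fun z => (A - z%:M) \in unitmx.

Definition imag_unit_times (R : realType) (s : R) : R[i] := Complex 0 s.

From mathcomp Require Import all_boot all_order all_algebra.
From mathcomp Require Import reals complex ring lra.
Import Order.TTheory GRing.Theory Num.Theory.
Set Implicit Arguments. Unset Strict Implicit. Unset Printing Implicit Defensive.
Local Open Scope ring_scope.
Local Open Scope complex_scope.

(* W_n acts mode by mode: on the j-th entries (a, b, c) of its three blocks
   it is the 3x3 matrix [[0, d, 0], [-d, 0, gamma d], [0, -gamma d, -d^2]]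
   with d = j + 1.  This block is dissipative, Re <W x, x> = -d^2 |c|^2, so an
   eigenvector for an imaginary eigenvalue has c = 0, and then the last two
   rows force b = 0 and a = 0.  Solving the block from the first row (b), the
   third (c) and the second (a), and using d >= 1, bounds |a|, |b|, |c|
   linearly by the image with constants independent of d; summing over the
   modes gives |x| <= 2 (1 + gamma^2) |W_n x| for every n. *)

Lemma sum_sqr3_le_cascade (R : realFieldType) (g x y z u1 u2 u3 : R) :
  0 <= x -> 0 <= y -> 0 <= z ->
  y <= u1 -> z <= u3 + g * u1 -> x <= g * (u3 + g * u1) + u2 ->
  x ^+ 2 + y ^+ 2 + z ^+ 2 <= (2 * (1 + g ^+ 2)) ^+ 2 * (u1 ^+ 2 + u2 ^+ 2 + u3 ^+ 2).
Proof.
move=> x0 y0 z0 hy hz hx.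
have sqr_le (p q : R) : 0 <= p -> p <= q -> p ^+ 2 <= q ^+ 2.
  by move=> p0 pq; rewrite ler_sqr ?nnegrE //; apply: le_trans pq.
have {}hy := sqr_le _ _ y0 hy; have {}hz := sqr_le _ _ z0 hz.
have {}hx := sqr_le _ _ x0 hx.
have hz2 : z ^+ 2 <= 2 * (u3 ^+ 2 + g ^+ 2 * u1 ^+ 2).
  by have := sqr_ge0 (u3 - g * u1); nra.
have hx2 : x ^+ 2 <= 3 * (g ^+ 2 * u3 ^+ 2 + (g ^+ 2) ^+ 2 * u1 ^+ 2 + u2 ^+ 2).
  have := sqr_ge0 (g * u3 - u2); have := sqr_ge0 (g ^+ 2 * u1 - u2).
  by have := sqr_ge0 (g * u3 - g ^+ 2 * u1); nra.
have := mulr_ge0 (sqr_ge0 g) (sqr_ge0 u1); have := mulr_ge0 (sqr_ge0 g) (sqr_ge0 u2).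
have := mulr_ge0 (sqr_ge0 (g ^+ 2)) (sqr_ge0 u2).
by have := mulr_ge0 (sqr_ge0 (g ^+ 2)) (sqr_ge0 u3); nra.
Qed.

Lemma unitmx_inj_col (F : fieldType) n (A : 'M[F]_n) :
  (forall x : 'cV_n, A *m x = 0 -> x = 0) -> A \in unitmx.
Proof.
move=> Ainj; rewrite -unitmx_tr -row_free_unit; apply: inj_row_free => v vA.
by apply: trmx_inj; rewrite trmx0; apply: Ainj; rewrite -[A]trmxK -trmx_mul vA trmx0.
Qed.

Lemma col_mx3_surj (T : Type) m1 m2 m3 n (x : 'M[T]_(m1 + m2 + m3, n)) :
  exists a b c, x = col_mx (col_mx a b) c.
Proof.
by exists (usubmx (usubmx x)), (dsubmx (usubmx x)), (dsubmx x); rewrite !vsubmxK.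
Qed.

Import ComplexField.Normc.

Section ComplexModes.
Variable R : rcfType.
Implicit Types (g d r s : R) (z : R[i]).

Lemma normc_ge0 z : 0 <= normc z.
Proof. by case: z => x y; apply: sqrtr_ge0. Qed.

Lemma normc_sqr z : normc z ^+ 2 = complex.Re z ^+ 2 + complex.Im z ^+ 2.
Proof. by case: z => x y /=; rewrite sqr_sqrtr // addr_ge0 ?sqr_ge0. Qed.

Lemma normc_eq0 z : (normc z == 0) = (z == 0).
Proof. by apply/eqP/eqP => [/eq0_normc | ->]; last exact: normc0. Qed.

Lemma normc_real_mul r z : normc (r%:C * z) = `|r| * normc z.
Proof. by rewrite normcM /= expr0n /= addr0 sqrtr_sqr. Qed.

(* [le_normcD] is stated on [Rcomplex R]; this copy on [R[i]] unifies with
   terms of [R[i]]. *)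
Lemma normcD_le z1 z2 : normc (z1 + z2) <= normc z1 + normc z2.
Proof. exact: le_normcD. Qed.

Lemma normc_le_real_mul z d : 1 <= d -> normc z <= normc (d%:C * z).
Proof.
move=> d1; rewrite normc_real_mul ger0_norm ?(le_trans ler01) //.
by rewrite ler_peMl ?normc_ge0.
Qed.

Lemma Re_conjc_mul_imag s z : complex.Re (z^* * (s*i * z)) = 0.
Proof. by case: z => x y; simpc => /=; ring. Qed.

Section Mode.
Variables (g d : R) (a b c f1 f2 f3 : R[i]).
Hypotheses (row1 : d%:C * b = f1)
  (row2 : - (d%:C * a) + g%:C * (d%:C * c) = f2)
  (row3 : - (g%:C * (d%:C * b)) - d%:C * (d%:C * c) = f3).

Lemma mode_dissipation :
  complex.Re (a^* * f1 + b^* * f2 + c^* * f3) = - (d * normc c) ^+ 2.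
Proof.
rewrite -row1 -row2 -row3 exprMn normc_sqr.
by case: a b c => [a1 a2] [b1 b2] [c1 c2]; simpc => /=; ring.
Qed.

Lemma mode_imag_eigen_eq0 s : 0 < g -> 0 < d ->
  f1 = s*i * a -> f2 = s*i * b -> f3 = s*i * c -> [/\ a = 0, b = 0 & c = 0].
Proof.
move=> g0 d0 ha hb hc.
have c0 : c = 0.
  have : (d * normc c) ^+ 2 = 0.
    rewrite -[LHS]opprK -mode_dissipation ha hb hc !raddfD /=.
    by rewrite !Re_conjc_mul_imag oppr0 !addr0.
  by move/eqP; rewrite sqrf_eq0 mulf_eq0 gt_eqF //= normc_eq0 => /eqP.
have b0 : b = 0.
  move: row3; rewrite hc c0 !mulr0 subr0 => /eqP.
  by rewrite oppr_eq0 !mulf_eq0 !fmorph_eq0 (gt_eqF g0) (gt_eqF d0) => /eqP.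
move: row2; rewrite hb b0 c0 !mulr0 addr0 => /eqP.
by rewrite oppr_eq0 mulf_eq0 fmorph_eq0 (gt_eqF d0) => /eqP.
Qed.

Lemma mode_sqr_le : 0 <= g -> 1 <= d ->
  normc a ^+ 2 + normc b ^+ 2 + normc c ^+ 2 <=
  (2 * (1 + g ^+ 2)) ^+ 2 * (normc f1 ^+ 2 + normc f2 ^+ 2 + normc f3 ^+ 2).
Proof.
move=> g0 d1.
have hd2c : normc (d%:C * (d%:C * c)) <= normc f3 + g * normc f1.
  have -> : d%:C * (d%:C * c) = - (f3 + g%:C * f1) by rewrite -row1 -row3; ring.
  rewrite normcN; apply: le_trans (normcD_le _ _) _.
  by rewrite normc_real_mul ger0_norm.
have hdc : normc (d%:C * c) <= normc f3 + g * normc f1.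
  exact: le_trans (normc_le_real_mul _ d1) hd2c.
apply: sum_sqr3_le_cascade; rewrite ?normc_ge0 //.
- by rewrite -row1 normc_le_real_mul.
- exact: le_trans (normc_le_real_mul _ d1) hdc.
- apply: le_trans (normc_le_real_mul _ d1) _.
  have -> : d%:C * a = g%:C * (d%:C * c) - f2 by rewrite -row2; ring.
  apply: le_trans (normcD_le _ _) _.
  by rewrite normcN normc_real_mul ger0_norm // lerD2r ler_wpM2l.
Qed.

End Mode.
End ComplexModes.

Section Wmx.
Variables (R : realType) (gamma : R) (n : nat).
Local Notation W := (Wmx gamma n).
Local Notation dC j := (((nat_of_ord j).+1%:R : R)%:C).
Implicit Types a b c : 'cV[R[i]]_n.

Lemma Wmx_mul_col_mx a b c :
  W *m col_mx (col_mx a b) c =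
  col_mx (col_mx (\col_j (dC j * b j 0))
                 (\col_j (- (dC j * a j 0) + gamma%:C * (dC j * c j 0))))
         (\col_j (- (gamma%:C * (dC j * b j 0)) - dC j * (dC j * c j 0))).
Proof.
have DmxE v : Dmx R n *m v = \col_j (dC j * v j 0).
  by apply/matrixP => j k; rewrite (ord1 k) /Dmx mul_diag_mx !mxE rmorph_nat.
rewrite /Wmx !mul_block_col mul_col_mx mul_row_col !mul0mx !add0r !addr0 add_col_mx.
(* Taking entries of [- (g *: M)] is very slow; [g *: - M] is not. *)
rewrite !mulNmx -!scalemxAl -mulmxA !DmxE addr0 -scalerN.
by congr col_mx; [congr col_mx|]; apply/matrixP => j k; rewrite !mxE ?mulrN.
Qed.

Lemma enormE m (v : 'cV[R[i]]_m) : enorm v = Num.sqrt (\sum_k normc (v k 0) ^+ 2).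
Proof. by congr Num.sqrt; apply: eq_bigr => k _; rewrite normc_sqr. Qed.

Lemma enorm_col_mx3 a b c :
  enorm (col_mx (col_mx a b) c) =
  Num.sqrt (\sum_j (normc (a j 0) ^+ 2 + normc (b j 0) ^+ 2 + normc (c j 0) ^+ 2)).
Proof.
rewrite enormE !big_split_ord !big_split /=.
by congr (Num.sqrt (_ + _ + _)); apply: eq_bigr => j _; rewrite !(col_mxEu, col_mxEd).
Qed.

Lemma Wmx_resolvent_imag (g0 : 0 < gamma) s : resolvent W (imag_unit_times s).
Proof.
rewrite /resolvent /imag_unit_times; apply: unitmx_inj_col => x.
have [a [b [c ->]]] := col_mx3_surj x.
rewrite mulmxBl mul_scalar_mx Wmx_mul_col_mx !scale_col_mx => /subr0_eq.
case/eq_col_mx => /eq_col_mx[E1 E2] E3.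
have mode0 j : [/\ a j 0 = 0, b j 0 = 0 & c j 0 = 0].
  have entry (M N : 'cV[R[i]]_n) : M = N -> M j 0 = N j 0 by move->.
  move: (entry _ _ E1) (entry _ _ E2) (entry _ _ E3); rewrite !mxE => h1 h2 h3.
  by case: (mode_imag_eigen_eq0 (erefl _) (erefl _) (erefl _) g0 (ltr0Sn R j) h1 h2 h3).
have col0 (v : 'cV[R[i]]_n) : (forall j, v j 0 = 0) -> v = 0.
  by move=> v0; apply/matrixP => j k; rewrite (ord1 k) v0 mxE.
have a0 : a = 0 by apply: col0 => j; case: (mode0 j).
have b0 : b = 0 by apply: col0 => j; case: (mode0 j).
have c0 : c = 0 by apply: col0 => j; case: (mode0 j).
by rewrite a0 b0 c0 !col_mx0.
Qed.

Lemma enorm_le_Wmx (g0 : 0 <= gamma) x :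
  enorm x <= 2 * (1 + gamma ^+ 2) * enorm (W *m x).
Proof.
have [a [b [c ->]]] := col_mx3_surj x.
have C0 : 0 <= 2 * (1 + gamma ^+ 2) by rewrite mulr_ge0 // addr_ge0 ?sqr_ge0.
rewrite Wmx_mul_col_mx !enorm_col_mx3 -(ger0_norm C0) -sqrtr_sqr -sqrtrM ?sqr_ge0 //.
apply: ler_wsqrtr; rewrite mulr_sumr; apply: ler_sum => j _; rewrite !mxE.
exact: mode_sqr_le (erefl _) (erefl _) (erefl _) g0 (ler1n R j.+1).
Qed.

End Wmx.

Theorem lemma4p7 (R : realType) (gamma : R) (hgamma : 0 < gamma) :
  (forall (n : nat) (s : R), resolvent (Wmx gamma n) (imag_unit_times s)) /\
  (exists C : R, forall (n : nat) (v : 'cV[R[i]]_(n + n + n)),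
      enorm (invmx (Wmx gamma n) *m v) <= C * enorm v).
Proof.
split=> [n|]; first exact: Wmx_resolvent_imag.
exists (2 * (1 + gamma ^+ 2)) => n v.
have Wunit : Wmx gamma n \in unitmx.
  by have := Wmx_resolvent_imag n hgamma 0; rewrite /resolvent raddf0 subr0.
by apply: le_trans (enorm_le_Wmx (ltW hgamma) _) _; rewrite mulKVmx.
Qed.
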